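(* Let $G$ be a finite simple graph. Then $\eta(G)$ equals the maximum number of pairwise vertex-disjoint cycles in $G$ (this maximum being $0$ if $G$ is a forest).
   Context: A finite simple graph $G$ is regarded as a simplicial complex of dimension at most $1$. Its face poset $\mathcal{F}(G)$ is the directed graph whose vertices are the vertices and the edges of $G$, with a directed edge $e\to v$ whenever $v$ is an endpoint of the edge $e$ of $G$. A matching on $\mathcal{F}(G)$ is a set $m$ of edges of $\mathcal{F}(G)$, no two of which share an endpoint. Given a matching $m$, let $\mathcal{F}_m(G)$ be the directed graph obtained from $\mathcal{F}(G)$ by reversing the orientation of every edge in $m$; a directed cycle of $\mathcal{F}_m(G)$ (closed directed path with no repeated vertices) is said to be supported by $m$, and $J(m)$ is the number of directed cycles supported by $m$. The matching complex $\mathrm{M}(G)$ is the simplicial complex whose vertex set is the set of edges of $\mathcal{F}(G)$ and whose simplices are the nonempty matchings; $\mathrm{M}_k(G)$ is the subcomplex of simplices (matchings) $m$ with $J(m)\le k$. $\eta(G)$ is the smallest integer $k\ge0$ with $\mathrm{M}_k(G)=\mathrm{M}(G)$. A cycle of $G$ is a subgraph homeomorphic to a circle. *)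

From mathcomp Require Import all_boot.
Set Implicit Arguments. Unset Strict Implicit. Unset Printing Implicit Defensive.

Section FacePoset.
(* A finite simple graph: vertex type V, symmetric irreflexive adjacency g. *)
Variables (V : finType) (g : rel V).

Definition is_gedge (E : {set V}) : bool :=
  [exists u, exists v, g u v && (E == [set u; v])].

(* Vertices of the face poset F(G): vertices of G (inl) and edges of G (inr,
   only sets satisfying is_gedge are actual nodes). *)
Definition node := (V + {set V})%type.

(* Edges of F(G): pairs (E, v), the directed edge E -> v with v an endpoint of E. *)
Definition farc := ({set V} * V)%type.
Definition is_farc (a : farc) : bool := is_gedge a.1 && (a.2 \in a.1).

Definition matching (m : {set farc}) : bool :=
  [forall a in m, is_farc a] &&
  [forall a in m, forall b in m, (a != b) ==> ((a.1 != b.1) && (a.2 != b.2))].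

Definition darc (m : {set farc}) (x y : node) : bool :=
  match x, y with
  | inr E, inl v => is_farc (E, v) && ((E, v) \notin m)
  | inl v, inr E => is_farc (E, v) && ((E, v) \in m)
  | _, _ => false
  end.

Definition is_dcycle (m : {set farc}) (C : {set node * node}) : bool :=
  [exists n : 'I_(#|{: node}|).+1, exists f : {ffun 'I_n -> node},
     [&& 0 < (n : nat), injectiveb f,
         [forall i, darc m (f i) (f (ordS i))] &
         C == [set (f i, f (ordS i)) | i : 'I_n]]].

Definition J (m : {set farc}) : nat := #|[set C | is_dcycle m C]|.

Definition Mcomplex : {set {set farc}} := [set m | matching m & m != set0].

Definition Mk (k : nat) : {set {set farc}} := [set m in Mcomplex | J m <= k].

Lemma eta_exists : exists k, Mk k == Mcomplex.
Proof.
exists #|{: {set node * node}}|; apply/eqP/setP => m.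
rewrite inE andb_idr // => _; exact: max_card.
Qed.

Definition eta : nat := ex_minn eta_exists.

(* A cycle of G (a subgraph homeomorphic to a circle) is a cycle graph
   v_0 v_1 ... v_{n-1} v_0 with n >= 3 distinct vertices and consecutive
   vertices adjacent; we record its vertex set. *)
Definition is_cycle_vset (S : {set V}) : bool :=
  [exists n : 'I_(#|V|).+1, exists f : {ffun 'I_n -> V},
     [&& 3 <= (n : nat), injectiveb f,
         [forall i, g (f i) (f (ordS i))] &
         S == [set f i | i : 'I_n]]].

Definition max_disjoint_cycles : nat :=
  \max_(P : {set {set V}} | [forall S in P, is_cycle_vset S] && trivIset P) #|P|.

End FacePoset.

From mathcomp Require Import all_boot zify.
Set Implicit Arguments. Unset Strict Implicit. Unset Printing Implicit Defensive.

(* Since M_k(G) = M(G) exactly when J(m) <= k for every nonempty matching m,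
   eta(G) is the maximum of J over nonempty matchings, and we compare J(m)
   with disjoint families of cycles of G in both directions.
   - In F_m(G) a node that has been entered has a unique way out, so two
     directed cycles through a common vertex of G coincide; and the vertices
     of G along a directed cycle form a cycle of G (the nodes alternate between
     vertices and edges, and length 2 is impossible).  Hence J(m) is at most
     the number of disjoint cycles (J_le_max_disjoint_cycles).
   - Conversely, a cycle u_0 ... u_(n-1) is traced by a directed cycle for the
     matching pairing u_i with the edge {u_i, u_(i+1)}; the union of these
     matchings over a disjoint family of cycles is again a matching, supporting
     one directed cycle per member (card_le_J_union_matching).
   Cyclic sequences are handled throughout as periodic functions on nat.     *)

Section CyclicSequences.
Variables (T R : finType).

Definition cyclic_image (N L : nat) (r : rel T) (k : T -> T -> R) (X : {set R}) : bool :=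
  [exists n : 'I_N.+1, exists f : {ffun 'I_n -> T},
    [&& L <= n, injectiveb f, [forall i, r (f i) (f (ordS i))] &
        X == [set k (f i) (f (ordS i)) | i : 'I_n]]].

Definition periodic (n : nat) (u : nat -> T) : Prop := forall a, u a = u (a %% n).

Lemma periodicS n u : periodic n u -> forall a, u (a %% n).+1 = u a.+1.
Proof.
by move=> Hu a; rewrite [LHS]Hu [RHS]Hu -(addn1 (a %% n)) -(addn1 a) modnDml.
Qed.

Lemma periodicD n u : periodic n u -> forall a, u (a + n) = u a.
Proof. by move=> Hu a; rewrite Hu modnDr -Hu. Qed.

Lemma periodic_of_shift d (u : nat -> T) :
  (forall a, u (a + d) = u a) -> periodic d u.
Proof.
move=> Hd a; rewrite {1}(divn_eq a d); elim: (a %/ d) => [|q IH] //.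
by rewrite mulSn -addnA addnC Hd.
Qed.

Lemma cyclic_imageP N L (r : rel T) (k : T -> T -> R) (X : {set R}) : 0 < L ->
  reflect (exists n u, [/\ L <= n <= N, periodic n u,
     (forall a b, a < n -> b < n -> u a = u b -> a = b),
     (forall a, r (u a) (u a.+1)) &
     X = [set k (u i) (u i.+1) | i : 'I_n]])
  (cyclic_image N L r k X).
Proof.
move=> L0; apply: (iffP existsP).
  case=> n /existsP [f /and4P [Ln /injectiveP finj /forallP fr /eqP ->]].
  have n0 : 0 < n by apply: leq_trans Ln.
  pose u a := f (Ordinal (ltn_pmod a n0)).
  have Hu : periodic n u.
    by move=> a; rewrite /u; f_equal; apply: val_inj; rewrite /= modn_mod.
  have fu (i : 'I_n) : f i = u i.
    by rewrite /u; f_equal; apply: val_inj; rewrite /= modn_small.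
  have fuS (i : 'I_n) : f (ordS i) = u i.+1 by rewrite /u; f_equal; apply: val_inj.
  exists n, u; split => //.
  - by rewrite Ln /= -ltnS ltn_ord.
  - by move=> a b an bn /finj []; rewrite !modn_small.
  - move=> a; have := fr (Ordinal (ltn_pmod a n0)).
    by rewrite fu fuS /= (periodicS Hu) -Hu.
  - by apply: eq_imset => i; rewrite fu fuS.
case=> n [u [/andP [Ln nN] Hu uinj ur ->]].
exists (Ordinal (nN : n < N.+1)); apply/existsP; exists [ffun i : 'I_n => u i].
apply/and4P; split => //.
- by apply/injectiveP => i j; rewrite !ffunE => /uinj e; apply: val_inj; apply: e.
- by apply/forallP => i; rewrite !ffunE /= -Hu.
- by apply/eqP; apply: eq_imset => i; rewrite !ffunE /= -Hu.
Qed.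

Lemma mem_cyclic_image n u (k : T -> T -> R) a :
  periodic n u -> 0 < n -> k (u a) (u a.+1) \in [set k (u i) (u i.+1) | i : 'I_n].
Proof.
move=> Hu n0; apply/imsetP; exists (Ordinal (ltn_pmod a n0)) => //=.
by rewrite periodicS // -Hu.
Qed.

Lemma periodic_pred n u (r : rel T) b : periodic n u -> 0 < n ->
  (forall a, r (u a) (u a.+1)) -> r (u (b + n.-1)) (u b).
Proof.
by move=> Hu n0 ur; have := ur (b + n.-1); rewrite -addnS prednK // (periodicD Hu).
Qed.

Lemma cyclic_image_shift_sub n u n' u' i0 i0' (k : T -> T -> R) :
  periodic n u -> i0 < n -> periodic n' u' -> 0 < n' ->
  (forall j, u (i0 + j) = u' (i0' + j)) ->
  [set k (u i) (u i.+1) | i : 'I_n] \subset [set k (u' i) (u' i.+1) | i : 'I_n'].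
Proof.
move=> Hu i0n Hu' n0' agree; apply/subsetP => _ /imsetP [i _ ->].
have e : i0 + (i + n - i0) = i + n.
  by rewrite subnKC // (leq_trans (ltnW i0n)) // leq_addl.
rewrite -(periodicD Hu i) -(periodicD Hu i.+1) addSn -e.
by have := mem_cyclic_image k (i0' + (i + n - i0)) Hu' n0'; rewrite -addnS -!agree addnS.
Qed.

End CyclicSequences.

Section FacePosetCycles.
Variables (V : finType) (g : rel V).
Hypotheses (g_sym : symmetric g) (g_irr : irreflexive g).

Local Notation node := (node V).

Lemma is_dcycleE m C : is_dcycle g m C = cyclic_image #|{: node}| 1 (darc g m) pair C.
Proof. by []. Qed.

Lemma is_cycle_vsetE S : is_cycle_vset g S = cyclic_image #|V| 3 g (fun x _ => x) S.
Proof. by []. Qed.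

Lemma gedge_pair E a b : is_gedge g E -> a \in E -> b \in E -> a != b ->
  g a b /\ E = [set a; b].
Proof.
case/existsP=> p /existsP [q /andP [gpq /eqP ->]].
rewrite !in_set2 => /orP[/eqP->|/eqP->] /orP[/eqP->|/eqP->]; rewrite ?eqxx //= => _.
by split; [rewrite g_sym | rewrite setUC].
Qed.

Lemma matching_farc m a : matching g m -> a \in m -> is_farc g a.
Proof. by case/andP=> /forallP Hm _ am; have := Hm a; rewrite am. Qed.

Lemma matching_disjoint m a b : matching g m -> a \in m -> b \in m -> a != b ->
  (a.1 != b.1) && (a.2 != b.2).
Proof.
case/andP=> _ /forallP Hm am bm ab.
by have := Hm a; rewrite am /= => /forallP /(_ b); rewrite bm ab.
Qed.

(* In F_m(G) a node that has been entered has at most one way out: a vertex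
   v leaves only along its (unique) matched arc, and an edge E entered from
   v (hence matched at v) can only leave to its other endpoint. *)
Lemma darc_functional m x y y' z : matching g m ->
  darc g m z x -> darc g m x y -> darc g m x y' -> y = y'.
Proof.
move=> mm; case: x => [v|E]; case: y => [w|F] //; case: y' => [w'|F'] //.
  move=> _ /andP [_ Fm] /andP [_ F'm].
  suff [->] : (F, v) = (F', v) by [].
  apply/eqP; apply/negPn/negP => ne; have := matching_disjoint mm Fm F'm ne.
  by rewrite /= eqxx andbF.
case: z => [a|?] //.
rewrite /darc /is_farc /=.
case/andP=> [/andP [_ aE] am] /andP [/andP [gE wE] wm] /andP [/andP [_ w'E] w'm].
have w'a : w' != a by apply: contraNneq w'm => ->.
have aw : a != w by apply: contraNneq wm => <-.
have [_ /= EE] := gedge_pair gE aE wE aw.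
by move: w'E; rewrite EE in_set2 (negbTE w'a) => /eqP ->.
Qed.

Definition dcycle_vertices (C : {set node * node}) : {set V} :=
  [set v | [exists y, (inl v, y) \in C]].

(* Two directed cycles of F_m(G) leaving the same node are equal: by
   darc_functional, the rest of the cycle is forced. *)
Lemma dcycle_unique m C C' x y y' : matching g m ->
  is_dcycle g m C -> is_dcycle g m C' -> (x, y) \in C -> (x, y') \in C' -> C = C'.
Proof.
move=> mm; rewrite !is_dcycleE.
move=> /cyclic_imageP-/(_ isT) [n [h [/andP [n0 _] Hh _ hr ->]]].
move=> /cyclic_imageP-/(_ isT) [n' [h' [/andP [n0' _] Hh' _ hr' ->]]].
case/imsetP=> i0 _ [e1 _]; case/imsetP=> i0' _ [e2 _].
have agree j : h (i0 + j) = h' (i0' + j).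
  elim: j => [|j IH]; first by rewrite !addn0 -e1 -e2.
  rewrite !addnS; apply: (darc_functional mm (periodic_pred _ Hh n0 hr) (hr _)).
  by rewrite IH; apply: hr'.
apply/eqP; rewrite eqEsubset (cyclic_image_shift_sub _ Hh (ltn_ord i0) Hh' n0' agree).
by rewrite (cyclic_image_shift_sub _ Hh' (ltn_ord i0') Hh n0 (fun j => esym (agree j))).
Qed.

Definition is_vertex (x : node) : bool := if x is inl _ then true else false.

Lemma darc_alternates m x y : darc g m x y -> is_vertex y = ~~ is_vertex x.
Proof. by case: x; case: y. Qed.

(* A directed cycle h of F_m(G), of length n, read from a vertex node h j0:
   its even-position nodes form a cycle of G of length n/2. *)
Section DcycleWalk.
Variables (m : {set farc V}) (n : nat) (h : nat -> node) (j0 : nat) (v0 : V).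
Hypotheses (mm : matching g m) (Hh : periodic n h) (n0 : 0 < n)
  (hinj : forall a b, a < n -> b < n -> h a = h b -> a = b)
  (hr : forall a, darc g m (h a) (h a.+1)) (hj0 : h j0 = inl v0).

Let is_vertex_succ a : is_vertex (h a.+1) = ~~ is_vertex (h a).
Proof. exact: darc_alternates (hr a). Qed.

Lemma dcycle_parity j : is_vertex (h (j0 + j)) = ~~ odd j.
Proof. by elim: j => [|j IH]; rewrite ?addn0 ?hj0 // addnS is_vertex_succ IH. Qed.

Lemma dcycle_length_even : n = (n./2).*2.
Proof.
have evn : ~~ odd n by rewrite -dcycle_parity (periodicD Hh) hj0.
by have := odd_double_half n; rewrite (negbTE evn) add0n.
Qed.

Definition walk (t : nat) : V := if h (j0 + t.*2) is inl v then v else v0.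

Lemma walkE t : h (j0 + t.*2) = inl (walk t).
Proof. by have := dcycle_parity t.*2; rewrite odd_double /walk; case: (h _). Qed.

Lemma walk_step t : exists E, [/\ h (j0 + t.*2).+1 = inr E,
  is_farc g (E, walk t), (E, walk t) \in m,
  is_farc g (E, walk t.+1) & (E, walk t.+1) \notin m].
Proof.
have : ~~ is_vertex (h (j0 + t.*2).+1).
  by rewrite -addnS dcycle_parity /= odd_double.
case HE: (h _) => [//|E] _; exists E.
have d1 := hr (j0 + t.*2); rewrite walkE HE in d1.
have d2 := hr (j0 + t.*2).+1.
rewrite HE -addn2 -addnA addn2 -doubleS walkE in d2.
by case/andP: d1 => ? ?; case/andP: d2 => ? ?.
Qed.

Lemma walk_adj t : g (walk t) (walk t.+1).
Proof.
have [E [_ /andP [gE aE] am /andP [_ bE] bm]] := walk_step t.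
have ab : walk t != walk t.+1 by apply: contraNneq bm => <-.
by case: (gedge_pair gE aE bE ab).
Qed.

Lemma walk_periodic : periodic n./2 walk.
Proof.
move=> t; suff : inl (walk t) = inl (walk (t %% n./2)) :> node by case.
rewrite -!walkE [LHS]Hh [RHS]Hh {1 3}dcycle_length_even; f_equal.
by rewrite -[(t %% _).*2]muln2 muln_modl !muln2 modnDmr.
Qed.

Lemma walk_inj a b : a < n./2 -> b < n./2 -> walk a = walk b -> a = b.
Proof.
have lt2 c : c < n./2 -> c.*2 < n by rewrite {2}dcycle_length_even ltn_double.
move=> /lt2 an /lt2 bn e; have : h (j0 + a.*2) = h (j0 + b.*2) by rewrite !walkE e.
rewrite Hh [RHS]Hh => /hinj.
move=> /(_ (ltn_pmod _ n0) (ltn_pmod _ n0)) /eqP.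
rewrite eqn_modDl !modn_small // => /eqP; exact: double_inj.
Qed.

(* The induced cycle of G has at least 3 vertices: one vertex would be a loop,
   and with two vertices u0 u1 both edge nodes of the cycle would be {u0, u1}. *)
Lemma walk_length : 2 < n./2.
Proof.
have u01 : walk 0 != walk 1 by apply/eqP => e; have := walk_adj 0; rewrite e g_irr.
rewrite ltnNge; apply/negP => k2.
have [k1|k2'] : n./2 = 1 \/ n./2 = 2.
- by move: n0; rewrite dcycle_length_even; lia.
- by move: u01; rewrite [walk 1]walk_periodic k1 eqxx.
have [E0 [h0 /andP [gE0 aE0] _ /andP [_ bE0] _]] := walk_step 0.
have [E1 [h1 /andP [gE1 bE1] _ /andP [_ aE1] _]] := walk_step 1.
rewrite [walk 2]walk_periodic k2' modnn in aE1.
have [_ /= EE0] := gedge_pair gE0 aE0 bE0 u01.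
have [_ /= EE1] := gedge_pair gE1 aE1 bE1 u01.
have : h (j0 + 1) = h (j0 + 3).
  by move: h0 h1; rewrite /= addn0 !addnS addn0 /= EE0 EE1 => -> ->.
rewrite Hh [RHS]Hh => /hinj.
move=> /(_ (ltn_pmod _ n0) (ltn_pmod _ n0)) /eqP.
by rewrite eqn_modDl dcycle_length_even k2'.
Qed.

Lemma walk_in_dcycle t : walk t \in dcycle_vertices [set (h i, h i.+1) | i : 'I_n].
Proof.
rewrite inE; apply/existsP; exists (h (j0 + t.*2).+1).
by rewrite -walkE; exact: mem_cyclic_image pair _ Hh n0.
Qed.

End DcycleWalk.

Lemma cycle_of_dcycle m C : matching g m -> is_dcycle g m C ->
  exists S, [/\ is_cycle_vset g S, S \subset dcycle_vertices C & S != set0].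
Proof.
move=> mm; rewrite is_dcycleE.
move=> /cyclic_imageP-/(_ isT) [n [h [/andP [n0 _] Hh hinj hr ->]]].
have [j0 [v0 hj0]] : exists j0 v0, h j0 = inl v0.
  case e0: (h 0) => [v0|E0]; first by exists 0, v0.
  have := darc_alternates (hr 0); rewrite e0; case e1: (h 1) => [v1|//] _.
  by exists 1, v1.
have k2 := walk_length mm Hh n0 hinj hr hj0.
have walk_inj' := walk_inj Hh n0 hinj hr hj0.
exists [set walk h j0 v0 i | i : 'I_n./2]; split.
- rewrite is_cycle_vsetE; apply/cyclic_imageP => //.
  exists n./2, (walk h j0 v0); split.
  + rewrite k2 /= -[n./2]card_ord; apply/leq_card => i j.
    by move/(walk_inj' _ _ (ltn_ord i) (ltn_ord j)) => /val_inj.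
  + exact: walk_periodic Hh hr hj0.
  + exact: walk_inj'.
  + exact: walk_adj hr hj0.
  + done.
- by apply/subsetP => _ /imsetP [t _ ->]; exact: walk_in_dcycle Hh n0 hr hj0 t.
- apply/set0Pn; exists (walk h j0 v0 0); apply/imsetP.
  by exists (Ordinal (ltn_trans (isT : 0 < 2) k2)).
Qed.

(* First inequality: choosing for every directed cycle of F_m(G) a cycle of G
   through its vertices gives a family of pairwise disjoint cycles, since
   directed cycles meeting at a vertex coincide (dcycle_unique). *)
Lemma J_le_max_disjoint_cycles m : matching g m -> J g m <= max_disjoint_cycles g.
Proof.
move=> mm; pose D := [set C | is_dcycle g m C].
pose inside C S := [&& is_cycle_vset g S, S \subset dcycle_vertices C & S != set0].
pose psi C := odflt set0 [pick S | inside C S].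
have psiP C : C \in D -> inside C (psi C).
  rewrite inE => /(cycle_of_dcycle mm) [S [S1 S2 S3]].
  rewrite /psi; case: pickP => [// | none].
  by have := none S; rewrite /inside S1 S2 S3.
have psi_meet C C' : C \in D -> C' \in D -> ~~ [disjoint psi C & psi C'] -> C = C'.
  move=> DC DC'; rewrite -setI_eq0 => /set0Pn [v]; rewrite inE => /andP [vC vC'].
  case/and3P: (psiP C DC) => _ /subsetP /(_ v vC) + _.
  case/and3P: (psiP C' DC') => _ /subsetP /(_ v vC') + _.
  rewrite !inE => /existsP [y' Hy'] /existsP [y Hy].
  by apply: (dcycle_unique mm _ _ Hy Hy'); rewrite -[is_dcycle _ _ _]in_set.
have psi_inj : {in D &, injective psi}.
  move=> C C' DC DC' e; apply: psi_meet => //.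
  case/and3P: (psiP C DC) => _ _ /set0Pn [v Hv].
  by rewrite -setI_eq0 e setIid; apply/set0Pn; exists v; rewrite -e.
rewrite /J -/D -(card_in_imset psi_inj).
apply: (bigmax_sup (psi @: D)) => //; apply/andP; split.
  by apply/forallP => S; apply/implyP => /imsetP [C DC ->]; case/and3P: (psiP C DC).
apply/trivIsetP => S S' /imsetP [C DC ->] /imsetP [C' DC' ->] ne.
by apply: contraR ne => /(psi_meet _ _ DC DC') ->.
Qed.

(* Conversely, a cycle u_0 ... u_(n-1) of G is the trace of a directed cycle
   u_0 -> {u_0,u_1} -> u_1 -> ... of F_m(G), for the matching m pairing each
   u_i with the edge towards its successor. *)
Section CycleMatching.
Variables (n : nat) (u : nat -> V).
Hypotheses (n3 : 2 < n) (nV : n <= #|V|) (Hu : periodic n u)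
  (uinj : forall a b, a < n -> b < n -> u a = u b -> a = b)
  (gu : forall a, g (u a) (u a.+1)).

Let n0 : 0 < n. Proof. exact: ltnW (ltnW n3). Qed.

Definition cycle_matching : {set farc V} :=
  [set ([set u i; u i.+1], u i) | i : 'I_n].

Definition cycle_lift (a : nat) : node :=
  if odd a then inr [set u a./2; u a./2.+1] else inl (u a./2).

Lemma cycle_eq_mod a b : u a = u b -> a %% n = b %% n.
Proof. by rewrite Hu [u b]Hu => /uinj; apply; exact: ltn_pmod. Qed.

Lemma cycle_edge a : is_gedge g [set u a; u a.+1].
Proof. by apply/existsP; exists (u a); apply/existsP; exists (u a.+1); rewrite gu eqxx. Qed.

(* Since n >= 3, the edge {u_a, u_a+1} determines a modulo n. *)
Lemma cycle_edge_eq a b : [set u a; u a.+1] = [set u b; u b.+1] -> a %% n = b %% n.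
Proof.
have no2 c : u c != u c.+2.
  apply/eqP => /cycle_eq_mod /eqP.
  by rewrite -[c in c %% n]addn0 -addn2 eqn_modDl mod0n modn_small.
have succ c d : u c = u d -> u c.+1 = u d.+1.
  by move/cycle_eq_mod => e; rewrite -(periodicS Hu) e (periodicS Hu).
move=> e; have : u a \in [set u b; u b.+1] by rewrite -e set21.
rewrite in_set2 => /orP [/eqP/cycle_eq_mod // | /eqP e1].
have : u b \in [set u a; u a.+1] by rewrite e set21.
rewrite in_set2 => /orP [/eqP/cycle_eq_mod -> // | /eqP e2].
by have := no2 a; rewrite e1 (succ _ _ e2) eqxx.
Qed.

Lemma mem_cycle_matching a : ([set u a; u a.+1], u a) \in cycle_matching.
Proof. exact: (mem_cyclic_image (fun x y => ([set x; y], x)) a Hu n0). Qed.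

Lemma cycle_matching_matching : matching g cycle_matching.
Proof.
have ordE (i j : 'I_n) : i %% n = j %% n -> i = j.
  by rewrite !modn_small // => /val_inj.
apply/andP; split.
  apply/forallP => a; apply/implyP => /imsetP [i _ ->].
  by rewrite /is_farc cycle_edge set21.
apply/forallP => a; apply/implyP => /imsetP [i _ ->].
apply/forallP => b; apply/implyP => /imsetP [j _ ->]; apply/implyP => ne /=.
apply/andP; split; apply: contra ne.
  by move=> /eqP/cycle_edge_eq/ordE ->.
by move=> /eqP/cycle_eq_mod/ordE ->.
Qed.

Lemma mem_cycle_vset a : u a \in [set u i | i : 'I_n].
Proof. exact: (mem_cyclic_image (fun x _ => x) a Hu n0). Qed.

Lemma cycle_matching_inside a : a \in cycle_matching ->
  (a.2 \in [set u i | i : 'I_n]) && (a.1 \subset [set u i | i : 'I_n]).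
Proof.
case/imsetP=> i _ -> /=; rewrite mem_cycle_vset; apply/subsetP => w.
by rewrite in_set2 => /orP [] /eqP ->; rewrite mem_cycle_vset.
Qed.

Lemma cycle_matching_neq0 : cycle_matching != set0.
Proof. by apply/set0Pn; exists ([set u 0; u 1], u 0); exact: mem_cycle_matching. Qed.

Lemma cycle_lift_periodic : periodic n.*2 cycle_lift.
Proof.
apply: periodic_of_shift => a; rewrite /cycle_lift oddD odd_double addbF.
by rewrite halfD odd_double andbF add0n doubleK -addSn !(periodicD Hu).
Qed.

Definition cycle_dcycle : {set node * node} :=
  [set (cycle_lift i, cycle_lift i.+1) | i : 'I_n.*2].

Lemma cycle_dcycleP : is_dcycle g cycle_matching cycle_dcycle.
Proof.
have n20 : 0 < n.*2 by rewrite double_gt0.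
rewrite is_dcycleE; apply/cyclic_imageP => //; exists n.*2, cycle_lift; split => //.
- rewrite n20 card_sum -addnn leq_add //; apply: leq_trans nV _.
  exact: leq_card (@set1_inj V).
- exact: cycle_lift_periodic.
- have half c : c < n.*2 -> c./2 < n by rewrite ltn_half_double.
  have ordE c d : c < n.*2 -> d < n.*2 -> c./2 %% n = d./2 %% n -> c./2 = d./2.
    by move=> /half cn /half dn; rewrite !modn_small.
  move=> a b an bn; have parity : odd a = odd b -> a./2 = b./2 -> a = b.
    by move=> oab hab; rewrite -[a]odd_double_half oab hab odd_double_half.
  rewrite /cycle_lift; case oa: (odd a); case ob: (odd b) => //= -[] e.
    by apply: parity; rewrite ?oa ?ob // (ordE _ _ an bn (cycle_edge_eq e)).
  by apply: parity; rewrite ?oa ?ob // (ordE _ _ an bn (cycle_eq_mod e)).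
- move=> a; rewrite /cycle_lift /= uphalf_half; case oa: (odd a) => /=.
    rewrite /is_farc /= cycle_edge set22 /=; apply/negP => /imsetP [j _ [e1 e2]].
    have := gu a./2; rewrite e2 [u a./2]Hu [u j]Hu (cycle_edge_eq e1).
    by rewrite -Hu g_irr.
  by rewrite /is_farc /= !add0n cycle_edge set21 mem_cycle_matching.
Qed.

Lemma cycle_dcycle_vertices : dcycle_vertices cycle_dcycle = [set u i | i : 'I_n].
Proof.
apply/setP => v; apply/idP/idP.
  rewrite inE => /existsP [y /imsetP [i _ [e1 _]]].
  by move: e1; rewrite /cycle_lift; case: (odd i) => // -[->]; exact: mem_cycle_vset.
case/imsetP=> i _ ->; rewrite inE; apply/existsP; exists (cycle_lift i.*2.+1).
have := mem_cyclic_image pair i.*2 cycle_lift_periodic.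
by rewrite double_gt0 /cycle_lift odd_double doubleK; apply.
Qed.

End CycleMatching.

Definition cycle_witness (S : {set V}) (MC : {set farc V} * {set node * node}) : bool :=
  [&& matching g MC.1, [forall a in MC.1, (a.2 \in S) && (a.1 \subset S)],
      is_dcycle g MC.1 MC.2, dcycle_vertices MC.2 == S & MC.1 != set0].

Lemma cycle_witness_exists S : is_cycle_vset g S -> exists MC, cycle_witness S MC.
Proof.
rewrite is_cycle_vsetE => /cyclic_imageP-/(_ isT) [n [u [/andP [n3 nV] Hu uinj gu ->]]].
exists (cycle_matching n u, cycle_dcycle n u); apply/and5P; split => /=.
- exact: cycle_matching_matching.
- by apply/forallP => a; apply/implyP; exact: cycle_matching_inside.
- exact: cycle_dcycleP.
- by rewrite cycle_dcycle_vertices.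
- exact: cycle_matching_neq0.
Qed.

Lemma dcycle_extend (M m : {set farc V}) C : is_dcycle g M C -> M \subset m ->
  (forall a, a \in m -> a.2 \in dcycle_vertices C -> a \in M) -> is_dcycle g m C.
Proof.
rewrite !is_dcycleE => /cyclic_imageP-/(_ isT) [n [h [nb Hh hinj hr eC]]] sub back.
have n0 : 0 < n by case/andP: nb.
apply/cyclic_imageP => //; exists n, h; split => // a.
have := hr a; case e1: (h a) => [v|E]; case e2: (h a.+1) => [w|F] //=.
  by case/andP=> f Fm; rewrite f (subsetP sub _ Fm).
case/andP=> f wm; rewrite f /=; apply: contra wm => wm'; apply: back wm' _.
rewrite inE /=; apply/existsP; exists (h a.+2); rewrite eC -e2.
exact: mem_cyclic_image pair a.+1 Hh n0.
Qed.

Section DisjointCycles.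
Variable P : {set {set V}}.
Hypotheses (Pc : [forall S in P, is_cycle_vset g S]) (Pt : trivIset P).

Definition witness (S : {set V}) : {set farc V} * {set node * node} :=
  odflt (set0, set0) [pick MC | cycle_witness S MC].

Lemma witnessP S : S \in P -> cycle_witness S (witness S).
Proof.
move=> SP; have /cycle_witness_exists [MC HMC] := forall_inP Pc S SP.
by rewrite /witness; case: pickP => [// | none]; have := none MC; rewrite HMC.
Qed.

Lemma disjoint_cycles_meet S S' v : S \in P -> S' \in P -> v \in S -> v \in S' ->
  S = S'.
Proof.
move=> SP S'P vS vS'; have [// | /(trivIsetP Pt _ _ SP S'P) /pred0P] := eqVneq S S'.
by move=> /(_ v); rewrite /= vS vS'.
Qed.

Lemma witness_matching S : S \in P -> matching g (witness S).1.
Proof. by case/witnessP/and5P. Qed.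

Lemma witness_inside S a : S \in P -> a \in (witness S).1 ->
  (a.2 \in S) && (a.1 \subset S).
Proof. by case/witnessP/and5P => _ /forall_inP + _ _ _; apply. Qed.

Lemma witness_vertices S : S \in P -> dcycle_vertices (witness S).2 = S.
Proof. by case/witnessP/and5P => _ _ _ /eqP. Qed.

Definition union_matching : {set farc V} := \bigcup_(S in P) (witness S).1.

(* Arcs of witnesses of distinct cycles are disjoint, as their edges and
   vertices lie in disjoint cycles. *)
Lemma union_matching_matching : matching g union_matching.
Proof.
apply/andP; split.
  apply/forall_inP => a /bigcupP [S SP aS]; exact: matching_farc (witness_matching SP) aS.
apply/forall_inP => a /bigcupP [S SP aS]; apply/forall_inP => b /bigcupP [S' S'P bS'].
apply/implyP => ab; have [eSS' | nSS'] := eqVneq S S'.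
  by rewrite -eSS' in bS'; exact: matching_disjoint (witness_matching SP) aS bS' ab.
case/andP: (witness_inside SP aS) => a2S _; case/andP: (witness_inside S'P bS') => b2S b1S.
have a2a1 : a.2 \in a.1 by case/andP: (matching_farc (witness_matching SP) aS).
apply/andP; split; apply: contra nSS' => /eqP e; apply/eqP.
  by apply: (disjoint_cycles_meet SP S'P a2S); apply: (subsetP b1S); rewrite -e.
by apply: (disjoint_cycles_meet SP S'P a2S); rewrite e.
Qed.

Lemma union_matching_dcycle S : S \in P -> is_dcycle g union_matching (witness S).2.
Proof.
move=> SP; case/and5P: (witnessP SP) => _ _ dS _ _.
apply: (dcycle_extend dS); first by apply/subsetP => a aS; apply/bigcupP; exists S.
move=> a /bigcupP [S' S'P aS']; rewrite (witness_vertices SP) => a2S.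
case/andP: (witness_inside S'P aS') => a2S' _.
by rewrite (disjoint_cycles_meet SP S'P a2S a2S').
Qed.

(* Distinct cycles give distinct directed cycles, as these visit their vertices. *)
Lemma card_le_J_union_matching : #|P| <= J g union_matching.
Proof.
have witness_inj : {in P &, injective (fun S => (witness S).2)}.
  by move=> S S' SP S'P /= e; rewrite -(witness_vertices SP) e witness_vertices.
rewrite /J -(card_in_imset witness_inj); apply: subset_leq_card.
by apply/subsetP => _ /imsetP [S SP ->]; rewrite inE union_matching_dcycle.
Qed.

Lemma union_matching_neq0 : 0 < #|P| -> union_matching != set0.
Proof.
case/card_gt0P=> S SP; case/and5P: (witnessP SP) => _ _ _ _ /set0Pn [a aS].
by apply/set0Pn; exists a; apply/bigcupP; exists S.
Qed.

End DisjointCycles.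

End FacePosetCycles.

Lemma J_le_eta (V : finType) (g : rel V) m : m \in Mcomplex g -> J g m <= eta g.
Proof.
by rewrite /eta; case: ex_minnP => e /eqP He _; rewrite -He inE => /andP [_].
Qed.

Lemma eta_le (V : finType) (g : rel V) k :
  (forall m, matching g m -> J g m <= k) -> eta g <= k.
Proof.
rewrite /eta; case: ex_minnP => e _ minimal Jk; apply: minimal.
by apply/eqP/setP => m; rewrite inE andb_idr // inE => /andP [/Jk].
Qed.

Unset Implicit Arguments.

Theorem mainTheorem4 (V : finType) (g : rel V)
    (g_sym : symmetric g) (g_irr : irreflexive g) :
  eta g = max_disjoint_cycles g.
Proof.
apply/eqP; rewrite eqn_leq; apply/andP; split.
  by apply: eta_le => m; apply: J_le_max_disjoint_cycles.
apply/bigmax_leqP => P /andP [Pc Pt].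
have [-> // | P0] := posnP #|P|.
apply: leq_trans (card_le_J_union_matching g_irr Pc Pt) (J_le_eta _).
by rewrite inE (union_matching_matching g_irr Pc Pt) union_matching_neq0.
Qed.
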